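(* Fix a universe $\mathcal{U}_i$ and assume function extensionality. The following two statements are logically equivalent. (P) If $\mathit{UA}_i$ is inhabited, then for all $A, B : \mathcal{U}_i$ the map $\mathit{idtoeqv} : (A = B) \to (A \simeq B)$ is an equivalence. (Q) If for all $A, B : \mathcal{U}_i$ and $C : A \to B \to \mathcal{U}_i$ we have (inhabitants of) $A = \sum_{a:A} 1$, $\left(\sum_{a:A}\sum_{b:B} C\,a\,b\right) = \left(\sum_{b:B}\sum_{a:A} C\,a\,b\right)$, and $\mathit{isContr}(A) \to A = 1$, then there exist terms $\mathit{unit} : \prod_{A:\mathcal{U}_i} A = \sum_{a:A}1$ and $\mathit{flip} : \prod_{A,B:\mathcal{U}_i}\prod_{C : A \to B \to \mathcal{U}_i}\left(\sum_{a:A}\sum_{b:B} C\,a\,b\right) = \left(\sum_{b:B}\sum_{a:A} C\,a\,b\right)$ such that $\mathsf{coerce}(\mathit{unit}_A)(a) = (a,* )$ and $\mathsf{coerce}(\mathit{flip}_{A,B,C})(a,b,c) = (b,a,c)$ for all $A, B, C$, $a : A$, $b : B$, $c : C\,a\,b$.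
   Context: Intensional Martin-Löf type theory with $\Sigma$, $\Pi$, intensional identity types, unit type $1$ with element $*$, and cumulative universes. Function extensionality: for all $A$, $B : A \to \mathcal{U}$, and $f, g : \prod_{x:A} B(x)$ there is a map $(\prod_{x:A} f(x) = g(x)) \to f = g$. Definitions: $\mathit{isContr}(A) \triangleq \sum_{a_0 : A}\prod_{a:A}(a_0 = a)$; $\mathit{fib}_f(b) \triangleq \sum_{a:A}(f\,a = b)$; $\mathit{isEquiv}(f) \triangleq \prod_{b:B}\mathit{isContr}(\mathit{fib}_f(b))$; $A \simeq B \triangleq \sum_{f : A \to B}\mathit{isEquiv}(f)$. $\mathit{idtoeqv} : (A = B) \to (A \simeq B)$ is defined by path induction with $\mathit{idtoeqv}(\mathsf{refl}) \triangleq \mathit{id}_A$, and $\mathsf{coerce}(p,a) \triangleq \mathrm{fst}(\mathit{idtoeqv}(p))(a)$. $\mathit{UA}_i \triangleq \prod_{A,B : \mathcal{U}_i}(A \simeq B) \to A = B$. *)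

(* Intensional MLTT rendering:
   - identity types are the Type-valued inductive [paths] below (NOT Rocq's Prop-valued eq);
   - Sigma types are the universe-polymorphic record [Sig] below;
   - Pi types are Rocq dependent products;
   - the unit type 1 is [unit] with element [tt];
   - universes U_i are Rocq's cumulative, polymorphic Type@{u}. *)
Set Universe Polymorphism.
Set Polymorphic Inductive Cumulativity.
Unset Universe Minimization ToSet.

Inductive paths@{u} {A : Type@{u}} (a : A) : A -> Type@{u} :=
  idpath : paths a a.
Arguments idpath {A a}, {A} a.
Notation "x = y" := (paths x y) : type_scope.

Record Sig@{u} {A : Type@{u}} (P : A -> Type@{u}) : Type@{u} :=
  pair { pr1 : A ; pr2 : P pr1 }.
Arguments pair {A} P pr1 pr2.
Arguments pr1 {A P} _.
Arguments pr2 {A P} _.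
Notation "{ x : A & P }" := (@Sig A (fun x : A => P%type)) : type_scope.
Notation "( x ; y )" := (pair _ x y) : core_scope.

Definition Funext@{u u' | u < u'} : Type@{u'} :=
  forall (A : Type@{u}) (B : A -> Type@{u}) (f g : forall x : A, B x),
    (forall x : A, f x = g x) -> f = g.

Definition isContr@{u} (A : Type@{u}) : Type@{u} :=
  { a0 : A & forall a : A, a0 = a }.

Definition fib@{u} {A B : Type@{u}} (f : A -> B) (b : B) : Type@{u} :=
  { a : A & f a = b }.

Definition isEquiv@{u} {A B : Type@{u}} (f : A -> B) : Type@{u} :=
  forall b : B, isContr (fib f b).

Definition Equiv@{u} (A B : Type@{u}) : Type@{u} :=
  { f : A -> B & isEquiv f }.

Definition idIsEquiv@{u} (A : Type@{u}) : isEquiv@{u} (fun a : A => a).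
Proof.
  intro b. exists (pair (fun a : A => a = b) b idpath).
  intros [a p]. destruct p. exact idpath.
Defined.

Definition idEquiv@{u} (A : Type@{u}) : Equiv@{u} A A :=
  pair _ (fun a : A => a) (idIsEquiv A).

Definition idtoeqv@{u v | u < v} {A B : Type@{u}} (p : @paths@{v} Type@{u} A B)
  : Equiv@{u} A B :=
  match p in paths _ B' return Equiv@{u} A B' with
  | idpath => idEquiv A
  end.

Definition coerce@{u v | u < v} {A B : Type@{u}} (p : @paths@{v} Type@{u} A B) (a : A) : B :=
  pr1 (idtoeqv@{u v} p) a.

Definition UA@{u v | u < v} : Type@{v} :=
  forall A B : Type@{u}, Equiv@{u} A B -> @paths@{v} Type@{u} A B.

Definition StmtP@{u v | u < v} : Type@{v} :=
  UA@{u v} -> forall A B : Type@{u}, isEquiv@{v} (@idtoeqv@{u v} A B).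

Definition StmtQ@{u v | u < v} : Type@{v} :=
  (forall (A B : Type@{u}) (C : A -> B -> Type@{u}),
      (@paths@{v} Type@{u} A { a : A & unit })
    * (@paths@{v} Type@{u} { a : A & { b : B & C a b } } { b : B & { a : A & C a b } })
    * (isContr@{u} A -> @paths@{v} Type@{u} A unit))
  ->
  { unit_ : forall A : Type@{u}, @paths@{v} Type@{u} A { a : A & unit } &
  { flip : forall (A B : Type@{u}) (C : A -> B -> Type@{u}),
             @paths@{v} Type@{u} { a : A & { b : B & C a b } } { b : B & { a : A & C a b } } &
      prod (forall (A : Type@{u}) (a : A), coerce@{u v} (unit_ A) a = (a; tt))
           (forall (A B : Type@{u}) (C : A -> B -> Type@{u}) (a : A) (b : B) (c : C a b),
         coerce@{u v} (flip A B C) (a; (b; c)) = (b; (a; c))) } }.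

Definition LogEquiv@{u} (P Q : Type@{u}) : Type@{u} := prod (P -> Q) (Q -> P).

(* Both directions rest on one construction.  From paths [A = Sig A 1], the flip of a
   double Sigma, and [isContr X -> X = 1], every equivalence [e : A ≃ B] yields a path
     A = Σa.1 = Σa.Σb.(e a = b) = Σb.Σa.(e a = b) = Σb.1 = B,
   the middle steps contracting the based path spaces and the fibres of [e].  When the unit and
   flip paths coerce as the canonical maps, this path coerces as [e].
   (P -> Q): the construction is a univalence map, so by (P) the canonical equivalences
   [A ≃ Σa.1] and the flip have [idtoeqv]-preimages, which coerce correctly.
   (Q -> P): univalence supplies the hypotheses of (Q); the construction fed with the resulting
   paths is a section of [idtoeqv], and a fiberwise map out of a based path space with a section
   is a fiberwise equivalence. *)
Set Universe Polymorphism.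
Unset Universe Minimization ToSet.

Definition ap {X Y : Type} (f : X -> Y) {x y : X} (p : x = y) : f x = f y :=
  match p with idpath => idpath end.

Definition concat {X : Type} {x y z : X} (p : x = y) (q : y = z) : x = z :=
  match q with idpath => p end.

Definition inverse {X : Type} {x y : X} (p : x = y) : y = x :=
  match p with idpath => idpath end.

Notation "p @ q" := (concat p q) (at level 20).

Lemma concat_Vp {X : Type} {x y : X} (p : x = y) : inverse p @ p = idpath.
Proof. destruct p. exact idpath. Defined.

Lemma path2_contr {X : Type} (h : isContr X) {x y : X} (p q : x = y) : p = q.
Proof.
  destruct h as [c contr].
  assert (canon : forall r : x = y, inverse (contr x) @ contr y = r).
  { intros r. destruct r. apply concat_Vp. }
  rewrite <- (canon p), <- (canon q). exact idpath.
Defined.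

Lemma path_isContr@{i j k | i < j, j < k} (funext : Funext@{j k})
  {X : Type@{i}} (h h' : isContr@{i} X) : h = h'.
Proof.
  destruct h as [c contr], h' as [c' contr'].
  destruct (contr c'). apply (ap (pair _ c)).
  apply funext. intro x. apply path2_contr. exact (c; contr).
Defined.

Lemma path_isEquiv@{i j k | i < j, j < k} (funext : Funext@{j k})
  {A B : Type@{i}} (f : A -> B) (u v : isEquiv@{i} f) : u = v.
Proof. apply funext. intro b. apply path_isContr@{i j k}. exact funext. Defined.

Lemma path_sig_hprop {X : Type} {P : X -> Type} (hP : forall x (u v : P x), u = v)
  (w w' : Sig P) : pr1 w = pr1 w' -> w = w'.
Proof.
  destruct w as [x u], w' as [x' v]. simpl. intro q. destruct q.
  exact (ap (pair P x) (hP x u v)).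
Defined.

Lemma path_Equiv@{i j k | i < j, j < k} (funext : Funext@{j k})
  {A B : Type@{i}} (e e' : Equiv@{i} A B) : (forall a, pr1 e a = pr1 e' a) -> e = e'.
Proof.
  intro h. apply (path_sig_hprop (path_isEquiv funext)).
  exact (funext A (fun _ => B) _ _ h).
Defined.

Lemma isContr_basedpaths {X : Type} (x : X) : isContr {y : X & x = y}.
Proof. exists (x; idpath). intros [y p]. destruct p. exact idpath. Defined.

Lemma isContr_retract {Y Z : Type} (r : Y -> Z) (s : Z -> Y)
  (rs : forall z, r (s z) = z) : isContr Y -> isContr Z.
Proof.
  intros [c contr]. exists (r c). intro z.
  exact (ap r (contr (s z)) @ rs z).
Defined.

Lemma isContr_fib_contr {Y Z : Type} (hY : isContr Y) (hZ : isContr Z) (g : Y -> Z) (z : Z) :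
  isContr (fib g z).
Proof.
  destruct hY as [cY contrY].
  exists (cY; inverse (pr2 hZ (g cY)) @ pr2 hZ z).
  intros [y q]. destruct (contrY y).
  apply (ap (pair _ cY)). apply path2_contr. exact hZ.
Defined.

Definition total {X : Type} {P Q : X -> Type} (f : forall x, P x -> Q x) (w : Sig P) : Sig Q :=
  (pr1 w; f (pr1 w) (pr2 w)).

(* The fibre of [f x] over [q] is a retract of the fibre of [total f] over [(x; q)]. *)
Lemma isEquiv_fiberwise_total {X : Type} {P Q : X -> Type} (f : forall x, P x -> Q x)
  (htot : forall y, isContr (fib (total f) y)) (x : X) : isEquiv (f x).
Proof.
  pose (r := fun (y : Sig Q) (w : fib (total f) y) =>
     match w with pair _ z e =>
       match e in (_ = y') return fib (f (pr1 y')) (pr2 y') with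
       | idpath => (pr2 z; idpath) end end).
  pose (s := fun q (v : fib (f x) q) => ((x; pr1 v); ap (pair Q x) (pr2 v)) : fib (total f) (x; q)).
  assert (rs : forall q v, r (x; q) (s q v) = v).
  { intros q [p e]. destruct e. exact idpath. }
  intro q. exact (isContr_retract (r (x; q)) (s q) (rs q) (htot (x; q))).
Defined.

Lemma isEquiv_basedpaths_section {X : Type} (a : X) (Q : X -> Type)
  (f : forall x, a = x -> Q x) (s : forall x, Q x -> a = x)
  (fs : forall x q, f x (s x q) = q) (x : X) : isEquiv (f x).
Proof.
  apply isEquiv_fiberwise_total. intro y.
  apply isContr_fib_contr.
  - apply isContr_basedpaths.
  - apply (isContr_retract (total f) (total s)).
    + intros [x' q]. exact (ap (pair Q x') (fs x' q)).
    + apply isContr_basedpaths.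
Defined.

Lemma isEquiv_sect {A B : Type} (f : A -> B) (g : B -> A) (fg : forall b, f (g b) = b)
  (hfg : forall a, @paths (fib f (f a)) (g (f a); fg (f a)) (a; idpath)) : isEquiv f.
Proof. intro b. exists (g b; fg b). intros [a q]. destruct q. exact (hfg a). Defined.

Definition equiv_sig_unit (A : Type) : Equiv A {a : A & unit}.
Proof.
  exists (fun a => (a; tt)).
  apply (isEquiv_sect _ pr1 (fun w => match w with (a; tt) => idpath end)).
  intro a. exact idpath.
Defined.

Definition sig_flip {A B : Type} (C : A -> B -> Type) (w : {a : A & {b : B & C a b}})
  : {b : B & {a : A & C a b}} :=
  (pr1 (pr2 w); (pr1 w; pr2 (pr2 w))).

Definition equiv_sig_flip (A B : Type) (C : A -> B -> Type)
  : Equiv {a : A & {b : B & C a b}} {b : B & {a : A & C a b}}.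
Proof.
  exists (sig_flip C).
  apply (isEquiv_sect _ (sig_flip (fun b a => C a b))
           (fun w => match w with (b; (a; c)) => idpath end)).
  intros [a [b c]]. exact idpath.
Defined.

Definition equiv_contr_unit (X : Type) (h : isContr X) : Equiv X unit.
Proof.
  exists (fun _ => tt).
  apply (isEquiv_sect _ (fun _ => pr1 h) (fun t => match t with tt => idpath end)).
  intro x. destruct h as [c contr]. simpl. destruct (contr x). exact idpath.
Defined.

Lemma coerce_concat {X Y Z : Type} (p : X = Y) (q : Y = Z) (x : X) :
  coerce (p @ q) x = coerce q (coerce p x).
Proof. destruct q. exact idpath. Defined.

Lemma coerce_inverse_coerce {X Y : Type} (p : X = Y) (x : X) : coerce (inverse p) (coerce p x) = x.
Proof. destruct p. exact idpath. Defined.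

Lemma pr1_coerce_ap_Sig {X : Type} {F G : X -> Type} (q : F = G) (w : Sig F) :
  pr1 (coerce (ap (@Sig X) q) w) = pr1 w.
Proof. destruct q. exact idpath. Defined.

Definition SigUnitPaths@{i j | i < j} : Type@{j} :=
  forall X : Type@{i}, @paths@{j} Type@{i} X {x : X & unit}.

Definition SigFlipPaths@{i j | i < j} : Type@{j} :=
  forall (A B : Type@{i}) (C : A -> B -> Type@{i}),
    @paths@{j} Type@{i} {a : A & {b : B & C a b}} {b : B & {a : A & C a b}}.

Definition ContrUnitPaths@{i j | i < j} : Type@{j} :=
  forall X : Type@{i}, isContr@{i} X -> @paths@{j} Type@{i} X unit.

Section UnivalenceFromSigPaths.

Universes i j k.
Constraint i < j.
Constraint j < k.

Variable funext : Funext@{j k}.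
Variable unit_path : SigUnitPaths@{i j}.
Variable flip_path : SigFlipPaths@{i j}.
Variable contr_path : ContrUnitPaths@{i j}.

Definition path_fam_contr_unit {X : Type@{i}} (F : X -> Type@{i})
  (hF : forall x, isContr@{i} (F x)) : F = (fun _ => unit) :=
  funext X (fun _ => Type@{i}) F (fun _ => unit) (fun x => contr_path _ (hF x)).

Definition ua_of_sig_paths (A B : Type@{i}) (e : Equiv@{i} A B) : @paths@{j} Type@{i} A B :=
  unit_path A
  @ ap (@Sig A) (inverse (path_fam_contr_unit (fun a => {b : B & pr1 e a = b})
                   (fun a => isContr_basedpaths (pr1 e a))))
  @ flip_path A B (fun a b => pr1 e a = b)
  @ ap (@Sig B) (path_fam_contr_unit (fun b => {a : A & pr1 e a = b}) (pr2 e))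
  @ inverse (unit_path B).

Hypothesis coerce_unit_path : forall (A : Type@{i}) (a : A), coerce@{i j} (unit_path A) a = (a; tt).

Hypothesis coerce_flip_path : forall (A B : Type@{i}) (C : A -> B -> Type@{i}) (a : A) (b : B)
  (c : C a b), coerce@{i j} (flip_path A B C) (a; (b; c)) = (b; (a; c)).

Lemma coerce_inverse_unit_path (A : Type@{i}) (w : {a : A & unit}) :
  coerce@{i j} (inverse (unit_path A)) w = pr1 w.
Proof.
  destruct w as [a []]. change (coerce (inverse (unit_path A)) (a; tt) = a).
  rewrite <- (coerce_unit_path A a). apply coerce_inverse_coerce.
Defined.

Lemma coerce_ua_of_sig_paths (A B : Type@{i}) (e : Equiv@{i} A B) (a : A) :
  coerce@{i j} (ua_of_sig_paths A B e) a = pr1 e a.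
Proof.
  unfold ua_of_sig_paths. rewrite !coerce_concat, coerce_unit_path.
  (* Only the first component of [w] is known; path induction on its based-path component
     brings it into the shape handled by the flip rule. *)
  set (w := coerce _ (a; tt)).
  assert (w_pr1 : pr1 w = a) by apply pr1_coerce_ap_Sig.
  rewrite <- w_pr1. clearbody w. clear w_pr1.
  destruct w as [a' [b q]]. destruct q. simpl.
  rewrite coerce_flip_path, coerce_inverse_unit_path. apply pr1_coerce_ap_Sig.
Defined.

End UnivalenceFromSigPaths.

Definition path_of_equiv@{i j | i < j} {A B : Type@{i}} (h : isEquiv@{j} (@idtoeqv@{i j} A B))
  (e : Equiv@{i} A B) : @paths@{j} Type@{i} A B :=
  pr1 (pr1 (h e)).

Lemma coerce_path_of_equiv@{i j | i < j} {A B : Type@{i}} (h : isEquiv@{j} (@idtoeqv@{i j} A B))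
  (e : Equiv@{i} A B) (a : A) : coerce@{i j} (path_of_equiv h e) a = pr1 e a.
Proof. exact (ap (fun E => pr1 E a) (pr2 (pr1 (h e)))). Defined.

Theorem mainTheorem14@{i j k | i < j, j < k} (funext : Funext@{j k}) :
  LogEquiv@{j} StmtP@{i j} StmtQ@{i j}.
Proof.
  split.
  - intros hP hyps.
    pose (unit_path := fun X : Type@{i} => match hyps X X (fun _ _ => unit) with (p, _, _) => p end).
    pose (flip_path := fun A B C => match hyps A B C with (_, p, _) => p end).
    pose (contr_path := fun X : Type@{i} => match hyps X X (fun _ _ => unit) with (_, _, p) => p end).
    pose (idtoeqv_isEquiv := hP (ua_of_sig_paths funext unit_path flip_path contr_path)).
    exists (fun A => path_of_equiv (idtoeqv_isEquiv _ _) (equiv_sig_unit A)).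
    exists (fun A B C => path_of_equiv (idtoeqv_isEquiv _ _) (equiv_sig_flip A B C)).
    split; intros; apply coerce_path_of_equiv.
  - intros hQ ua A.
    destruct (hQ (fun A B C => (ua _ _ (equiv_sig_unit A), ua _ _ (equiv_sig_flip A B C),
                               fun h => ua _ _ (equiv_contr_unit A h))))
      as [unit_path [flip_path [coerce_unit_path coerce_flip_path]]].
    pose (contr_path := fun X h => ua X unit (equiv_contr_unit X h)).
    apply (isEquiv_basedpaths_section A (Equiv A) (fun B => @idtoeqv A B)
             (ua_of_sig_paths funext unit_path flip_path contr_path A)).
    intros B e. apply (path_Equiv funext). intro a.
    exact (coerce_ua_of_sig_paths funext unit_path flip_path contr_path
             coerce_unit_path coerce_flip_path A B e a).
Qed.
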